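(* Consider the plant $\dot x=Ax+B_1w+Bu$ with $A\mathbb{1}=0$ and $B$ of full column rank, in feedback with a state-feedback controller $u=Kx$ ($K$ a rational transfer matrix with $sI-A-BK(s)$ invertible), and let $\Phi_u(s)=K(s)(sI-A-BK(s))^{-1}$. Then $K(s)\mathbb{1}=0$ if and only if $\Phi_u(s)\mathbb{1}=0$. In particular, for the plant $\dot x=u+w$, a state-feedback controller $K$ satisfies $K\mathbb{1}=0$ iff the corresponding $\Phi_u$ satisfies $\Phi_u\mathbb{1}=0$.
   Context: $\mathbb{1}$ denotes the all-ones vector; a matrix (or transfer matrix) $M$ with $M\mathbb{1}=0$ is called relative. *)

From HB Require Import structures.
From mathcomp Require Import all_boot all_order all_algebra.
From mathcomp Require Import fraction.
Set Implicit Arguments. Unset Strict Implicit. Unset Printing Implicit Defensive.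
Import GRing.Theory.
Local Open Scope ring_scope.

Notation ratfun R := {fraction {poly R}}.

Definition cmx (R : fieldType) (m n : nat) (M : 'M[R]_(m, n)) : 'M[ratfun R]_(m, n) :=
  map_mx (fun a : R => FracField.tofrac (a%:P)) M.

Definition svar (R : fieldType) : ratfun R := FracField.tofrac 'X.

Definition ones (T : nzRingType) (n : nat) : 'cV[T]_n := const_mx 1.

Definition closed_loop (R : fieldType) (n m : nat) (A : 'M[R]_n) (B : 'M[R]_(n, m))
  (K : 'M[ratfun R]_(m, n)) : 'M[ratfun R]_n :=
  (svar R)%:M - cmx A - cmx B *m K.

Definition Phi_u (R : fieldType) (n m : nat) (A : 'M[R]_n) (B : 'M[R]_(n, m))
  (K : 'M[ratfun R]_(m, n)) : 'M[ratfun R]_(m, n) :=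
  K *m invmx (closed_loop A B K).

From HB Require Import structures.
From mathcomp Require Import all_boot all_order all_algebra.
From mathcomp Require Import fraction.
Set Implicit Arguments.
Unset Strict Implicit.
Unset Printing Implicit Defensive.

Import GRing.Theory.
Local Open Scope ring_scope.

(* Since A 1 = 0, the vector 1 is an eigenvector of sI - A for the eigenvalue
   s.  If K 1 = 0, it is also one of sI - A - BK, so (sI - A - BK)^-1 1 = s^-1 1
   and Phi_u 1 = s^-1 K 1 = 0.  Conversely, if w := (sI - A - BK)^-1 1
   satisfies K w = 0, then (sI - A) w = 1, and invertibility of sI - A forces
   w = s^-1 1 again, whence K 1 = s Phi_u 1 = 0.  Neither the rank of B nor the
   disturbance input plays any role. *)

Section RelativeFeedback.

Variables (F : fieldType) (n m : nat).
Variables (s : F) (A : 'M[F]_n) (B : 'M[F]_(n, m)) (K : 'M[F]_(m, n)).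
Variable v : 'cV[F]_n.
Hypotheses (s_neq0 : s != 0) (Av0 : A *m v = 0).

Lemma invmx_eigenvector (M : 'M[F]_n) :
  M \in unitmx -> M *m v = s *: v -> invmx M *m v = s^-1 *: v.
Proof.
move=> Munit Mv.
by rewrite -[in LHS](scalerK s_neq0 v) -scalemxAr -Mv mulKmx.
Qed.

Lemma shift_sub_mulmx_eigen : (s%:M - A) *m v = s *: v.
Proof. by rewrite mulmxBl mul_scalar_mx Av0 subr0. Qed.

Lemma feedback_mulmx_ker (w : 'cV[F]_n) :
  K *m w = 0 -> (s%:M - A - B *m K) *m w = (s%:M - A) *m w.
Proof. by move=> Kw0; rewrite mulmxBl -mulmxA Kw0 mulmx0 subr0. Qed.

Hypotheses (shift_unit : s%:M - A \in unitmx)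
           (loop_unit : s%:M - A - B *m K \in unitmx).

Let w := invmx (s%:M - A - B *m K) *m v.

Lemma feedback_inv_eigen : K *m v = 0 \/ K *m w = 0 -> w = s^-1 *: v.
Proof.
case=> [Kv0 | Kw0].
  by apply: invmx_eigenvector; rewrite // feedback_mulmx_ker ?shift_sub_mulmx_eigen.
have shiftw : (s%:M - A) *m w = v by rewrite -feedback_mulmx_ker // mulKVmx.
rewrite -[w](mulKmx shift_unit) shiftw.
exact: invmx_eigenvector shift_unit shift_sub_mulmx_eigen.
Qed.

Lemma relative_feedbackP :
  K *m v = 0 <-> K *m invmx (s%:M - A - B *m K) *m v = 0.
Proof.
have Kw : K *m v = 0 \/ K *m w = 0 -> K *m w = s^-1 *: (K *m v).
  by move=> /feedback_inv_eigen ->; rewrite scalemxAr.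
rewrite -mulmxA -/w; split=> [Kv0 | Kw0].
  by rewrite Kw ?Kv0 ?scaler0 //; left.
apply/eqP; have /esym/eqP := Kw (or_intror Kw0); rewrite Kw0.
by rewrite scaler_eq0 invr_eq0 (negbTE s_neq0).
Qed.

End RelativeFeedback.

Lemma svar_neq0 (R : fieldType) : svar R != 0.
Proof. by rewrite tofrac_eq polyX_eq0. Qed.

Lemma cmxE (R : fieldType) (k l : nat) (M : 'M[R]_(k, l)) :
  cmx M = map_mx (@tofrac _) (map_mx polyC M).
Proof. by rewrite -map_mx_comp. Qed.

Lemma cmxM (R : fieldType) (k l r : nat) (M : 'M[R]_(k, l)) (N : 'M[R]_(l, r)) :
  cmx (M *m N) = cmx M *m cmx N.
Proof. by rewrite !cmxE !map_mxM. Qed.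

Lemma ones_cmx (R : fieldType) (k : nat) : ones _ k = cmx (ones R k).
Proof. by apply/matrixP=> i j; rewrite !mxE rmorph1. Qed.

(* det (sI - A) is the characteristic polynomial of A, monic hence nonzero. *)
Lemma svar_sub_cmx_unit (R : fieldType) (k : nat) (A : 'M[R]_k) :
  (svar R)%:M - cmx A \in unitmx.
Proof.
have -> : (svar R)%:M - cmx A = map_mx (@tofrac _) (char_poly_mx A).
  by rewrite /char_poly_mx map_mxB map_scalar_mx cmxE.
by rewrite unitmxE unitfE det_map_mx tofrac_eq monic_neq0 ?char_poly_monic.
Qed.

Theorem lemma4 (R : fieldType) (n m p : nat) (A : 'M[R]_n) (B1 : 'M[R]_(n, p))
  (B : 'M[R]_(n, m)) (K : 'M[{fraction {poly R}}]_(m, n)) :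
  A *m ones R n = 0 ->
  \rank B = m ->
  closed_loop A B K \in unitmx ->
  (K *m ones _ n = 0 <-> Phi_u A B K *m ones _ n = 0).
Proof.
move=> A1 _ loop_unit.
have cmxA1 : cmx A *m ones _ n = 0.
  by rewrite ones_cmx -cmxM A1; apply/matrixP=> i j; rewrite !mxE rmorph0.
exact: relative_feedbackP (svar_neq0 R) cmxA1 (svar_sub_cmx_unit A) loop_unit.
Qed.
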